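(* Let $q$ be a prime power and $\mathbb F_q$ the field with $q$ elements. For $z\in\mathbb F_q$ let $v_z=(1,z,z^2,z^3)\in\mathbb F_q^4$, and let $\mathcal L_z=\{\{x+yv_z: y\in\mathbb F_q\}: x\in\mathbb F_q^4\}$ be the set of lines in direction $v_z$. Let $G=G(q)$ be the bipartite graph with parts $P=\mathbb F_q^4$ and $L=\bigcup_{z\in\mathbb F_q}\mathcal L_z$, where a point $p\in P$ is adjacent to a line $\ell\in L$ if and only if $p\in\ell$. Suppose $p_1\ell_1p_2\ell_2p_3\ell_3p_4\ell_4p_1$ is a cycle of length $8$ in $G$ (so $p_1,\dots,p_4\in P$ and $\ell_1,\dots,\ell_4\in L$ are eight distinct vertices, with $p_1,p_2\in\ell_1$, $p_2,p_3\in\ell_2$, $p_3,p_4\in\ell_3$, $p_4,p_1\in\ell_4$), and let $v_1,v_2,v_3,v_4$ be the directions of $\ell_1,\ell_2,\ell_3,\ell_4$ respectively (i.e. $v_i=v_{z}$ where $\ell_i\in\mathcal L_{z}$). Then $v_1=v_3$, $v_2=v_4$, and $v_1\neq v_2$. *)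

From HB Require Import structures.
From mathcomp Require Import all_boot all_order all_algebra all_field.
Set Implicit Arguments. Unset Strict Implicit. Unset Printing Implicit Defensive.
Import GRing.Theory.
Local Open Scope ring_scope.

Definition vdir (F : fieldType) (z : F) : 'rV[F]_4 := \row_(i < 4) z ^+ i.

Definition line_of (F : finFieldType) (x : 'rV[F]_4) (z : F) : {set 'rV[F]_4} :=
  [set x + y *: vdir z | y : F].

Definition in_Lz (F : finFieldType) (z : F) (l : {set 'rV[F]_4}) : Prop :=
  exists x : 'rV[F]_4, l = line_of x z.

From HB Require Import structures.
From mathcomp Require Import all_boot all_order all_algebra all_field.
From mathcomp Require Import ring.
Set Implicit Arguments.
Unset Strict Implicit.
Unset Printing Implicit Defensive.
Local Open Scope ring_scope.
Import GRing.Theory.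

(* Going around the cycle, p_(i+1) - p_i = a_i v_(z_i) with a_i <> 0, and these
   four steps sum to zero.  Two distinct lines through a common point have
   distinct directions, so consecutive z_i differ.  Combining the four
   coordinates of the relation with the coefficients of
   (X - z2)(X - z3)(X - z4) leaves a1 (z1 - z2)(z1 - z3)(z1 - z4) = 0,
   which forces z1 = z3; rotating the cycle gives z2 = z4. *)

Lemma vdirE (F : fieldType) (z : F) (k : 'I_4) : vdir z 0 k = z ^+ k.
Proof. by rewrite mxE. Qed.

Lemma vdir_inj (F : fieldType) : injective (@vdir F).
Proof. by move=> a b /(congr1 (fun v : 'rV[F]_4 => v 0 1)); rewrite !vdirE !expr1. Qed.

Lemma vdir_comb4_eq0 (F : fieldType) (a1 a2 a3 a4 z1 z2 z3 z4 : F) :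
  a1 *: vdir z1 + a2 *: vdir z2 + a3 *: vdir z3 + a4 *: vdir z4 = 0 ->
  a1 * ((z1 - z2) * (z1 - z3) * (z1 - z4)) = 0.
Proof.
move=> rel.
have moment (k : 'I_4) :
    a1 * z1 ^+ k + a2 * z2 ^+ k + a3 * z3 ^+ k + a4 * z4 ^+ k = 0.
  by move/(congr1 (fun v : 'rV[F]_4 => v 0 k)): rel; rewrite !mxE.
have -> : a1 * ((z1 - z2) * (z1 - z3) * (z1 - z4)) =
  (a1 * z1 ^+ 3 + a2 * z2 ^+ 3 + a3 * z3 ^+ 3 + a4 * z4 ^+ 3)
  - (z2 + z3 + z4) * (a1 * z1 ^+ 2 + a2 * z2 ^+ 2 + a3 * z3 ^+ 2 + a4 * z4 ^+ 2)
  + (z2 * z3 + z2 * z4 + z3 * z4) * (a1 * z1 ^+ 1 + a2 * z2 ^+ 1 + a3 * z3 ^+ 1 + a4 * z4 ^+ 1)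
  - z2 * z3 * z4 * (a1 * z1 ^+ 0 + a2 * z2 ^+ 0 + a3 * z3 ^+ 0 + a4 * z4 ^+ 0).
  by ring.
by rewrite (moment 3) (moment 2) (moment 1) (moment 0); ring.
Qed.

Lemma vdir_comb4_eq (F : fieldType) (a1 a2 a3 a4 z1 z2 z3 z4 : F) :
  a1 *: vdir z1 + a2 *: vdir z2 + a3 *: vdir z3 + a4 *: vdir z4 = 0 ->
  a1 != 0 -> z1 != z2 -> z1 != z4 -> z1 = z3.
Proof.
move=> /vdir_comb4_eq0 /eqP + a1_neq0 z12 z14.
rewrite !mulf_eq0 !subr_eq0 (negbTE a1_neq0) (negbTE z12) (negbTE z14) orbF.
by move/eqP.
Qed.

Section Lines.

Context {F : finFieldType}.

Lemma line_of_shift (x p : 'rV[F]_4) (z : F) :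
  p \in line_of x z -> line_of x z = line_of p z.
Proof.
case/imsetP => y _ ->; apply/setP => u.
apply/imsetP/imsetP => [[t _ ->]|[t _ ->]].
  by exists (t - y) => //; rewrite -addrA -scalerDl subrKC.
by exists (y + t) => //; rewrite scalerDl addrA.
Qed.

Lemma line_of_step (x p p' : 'rV[F]_4) (z : F) :
  p \in line_of x z -> p' \in line_of x z -> p != p' ->
  exists2 a : F, a != 0 & p' - p = a *: vdir z.
Proof.
move=> /line_of_shift -> /imsetP[a _ ->] p_neq.
exists a; last by rewrite addrC addKr.
by apply: contraNneq p_neq => ->; rewrite scale0r addr0.
Qed.

Lemma meet_lines_dir_neq (x x' p : 'rV[F]_4) (z z' : F) :
  p \in line_of x z -> p \in line_of x' z' ->
  line_of x z != line_of x' z' -> z != z'.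
Proof.
move=> /line_of_shift -> /line_of_shift ->.
by apply: contraNneq => ->.
Qed.

End Lines.

Theorem lemma4p2 (q : nat) (F : finFieldType) (hq : #|F| = q)
    (p1 p2 p3 p4 : 'rV[F]_4) (l1 l2 l3 l4 : {set 'rV[F]_4})
    (z1 z2 z3 z4 : F) :
  in_Lz z1 l1 -> in_Lz z2 l2 -> in_Lz z3 l3 -> in_Lz z4 l4 ->
  uniq [:: p1; p2; p3; p4] -> uniq [:: l1; l2; l3; l4] ->
  p1 \in l1 -> p2 \in l1 -> p2 \in l2 -> p3 \in l2 ->
  p3 \in l3 -> p4 \in l3 -> p4 \in l4 -> p1 \in l4 ->
  vdir z1 = vdir z3 /\ vdir z2 = vdir z4 /\ vdir z1 <> vdir z2.
Proof.
move=> [x1 ->] [x2 ->] [x3 ->] [x4 ->] up ul.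
move=> p1l1 p2l1 p2l2 p3l2 p3l3 p4l3 p4l4 p1l4.
move: up; rewrite /= !inE !negb_or => /and4P[/and3P[p12 _ p14] /andP[p23 _] p34 _].
move: ul; rewrite /= !inE !negb_or => /and4P[/and3P[l12 _ l14] /andP[l23 _] _ _].
have z12 := meet_lines_dir_neq p2l1 p2l2 l12.
have z23 := meet_lines_dir_neq p3l2 p3l3 l23.
have z14 := meet_lines_dir_neq p1l1 p1l4 l14.
have [a1 a1_neq0 e1] := line_of_step p1l1 p2l1 p12.
have [a2 a2_neq0 e2] := line_of_step p2l2 p3l2 p23.
have [a3 _ e3] := line_of_step p3l3 p4l3 p34.
have [a4 _ e4] := line_of_step p4l4 p1l4 (contra_neq esym p14).
have cycle_rel :
    a1 *: vdir z1 + a2 *: vdir z2 + a3 *: vdir z3 + a4 *: vdir z4 = 0.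
  by rewrite -e1 -e2 -e3 -e4; apply/rowP => k; rewrite !mxE; ring.
have z13 := vdir_comb4_eq cycle_rel a1_neq0 z12 z14.
have z24 : z2 = z4.
  have rotated_rel :
      a2 *: vdir z2 + a3 *: vdir z3 + a4 *: vdir z4 + a1 *: vdir z1 = 0.
    by rewrite -cycle_rel addrC !addrA.
  by apply: vdir_comb4_eq rotated_rel a2_neq0 z23 _; rewrite eq_sym.
split; first by rewrite z13.
split; first by rewrite z24.
by move/vdir_inj/eqP; apply/negP.
Qed.
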